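(* Let $f : \{0, 1\}^n \to \{0, 1\}$ be a Boolean function. Then $\mathsf{D}_{\mathrm{cc}}^\rightarrow(f \circ \mathsf{AND}) = \lceil\log(\mathsf{Pat}^{\mathsf{M}}(f))\rceil$.
   Context: Every $f:\{0,1\}^n\to\{0,1\}$ has a unique M\''obius expansion $f=\sum_{S\subseteq[n]}\widetilde f(S)\mathsf{AND}_S$ with real coefficients, where $\mathsf{AND}_S(x)=\prod_{i\in S}x_i$; its M\''obius support is $\mathcal{S}_f=\{S:\widetilde f(S)\ne0\}$. The pattern of $x\in\{0,1\}^n$ is the vector $(\mathsf{AND}_S(x))_{S\in\mathcal S_f}\in\{0,1\}^{\mathcal S_f}$, and the M\''obius pattern complexity $\mathsf{Pat}^{\mathsf{M}}(f)$ is the number of distinct patterns over all $x\in\{0,1\}^n$. $f\circ\mathsf{AND}$ is the two-party function $(x,y)\mapsto f(x_1\wedge y_1,\dots,x_n\wedge y_n)$ (Alice holds $x$, Bob $y$); $\mathsf{D}_{\mathrm{cc}}^\rightarrow$ is deterministic one-way communication complexity. Logarithms are base 2. *)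

From mathcomp Require Import all_boot all_algebra.
Set Implicit Arguments. Unset Strict Implicit. Unset Printing Implicit Defensive.
Import GRing.Theory.
Local Open Scope ring_scope.

Definition ANDS (n : nat) (S : {set 'I_n}) (x : n.-tuple bool) : bool :=
  [forall i in S, tnth x i].

Definition indic (n : nat) (T : {set 'I_n}) : n.-tuple bool :=
  [tuple i \in T | i < n].

(* Moebius coefficient: the unique coefficients of f = sum_S c(S) AND_S,
   given by Moebius inversion  c(S) = sum_{T subset S} (-1)^{|S|-|T|} f(1_T).
   (They are integers; computed in int, so the support is the same as over R.) *)
Definition mobius (n : nat) (f : n.-tuple bool -> bool) (S : {set 'I_n}) : int :=
  \sum_(T : {set 'I_n} | T \subset S)
     (-1) ^+ (#|S| - #|T|)%N * (f (indic T))%:R.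

(* Pattern of x: (AND_S(x))_{S in supp f}, encoded as a function on all sets,
   forced to false outside the Moebius support. *)
Definition pattern (n : nat) (f : n.-tuple bool -> bool) (x : n.-tuple bool)
  : {ffun {set 'I_n} -> bool} :=
  [ffun S => (mobius f S != 0) && ANDS S x].

Definition PatM (n : nat) (f : n.-tuple bool -> bool) : nat :=
  #|[set pattern f x | x : n.-tuple bool]|.

Definition compAND (n : nat) (f : n.-tuple bool -> bool)
  (x y : n.-tuple bool) : bool :=
  f [tuple tnth x i && tnth y i | i < n].

Definition oneway_protocol (n : nat) (F : n.-tuple bool -> n.-tuple bool -> bool)
  (c : nat) : bool :=
  [exists A : {ffun n.-tuple bool -> c.-tuple bool},
   exists B : {ffun (c.-tuple bool * n.-tuple bool) -> bool},
   [forall x, forall y, B (A x, y) == F x y]].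

Lemma oneway_protocol_exists (n : nat) (F : n.-tuple bool -> n.-tuple bool -> bool) :
  exists c, oneway_protocol F c.
Proof.
exists n; apply/existsP; exists [ffun x => x]; apply/existsP.
exists [ffun p => F p.1 p.2]; apply/forallP => x; apply/forallP => y.
by rewrite !ffunE.
Qed.

Definition Dcc_oneway (n : nat) (F : n.-tuple bool -> n.-tuple bool -> bool) : nat :=
  ex_minn (oneway_protocol_exists F).

Definition ceil_log2 (m : nat) : nat := up_log 2 m.

From mathcomp Require Import all_boot all_algebra.
Set Implicit Arguments. Unset Strict Implicit. Unset Printing Implicit Defensive.
Import GRing.Theory.
Local Open Scope ring_scope.

(* A one-way protocol of cost c exists iff the matrix of F has at most 2^c
   distinct rows, so D^->(F) = ceil(log #rows).  For F = f o AND, the row of x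
   is y |-> f(x /\ y) = sum_S (f~(S) AND_S(x)) AND_S(y) by Moebius expansion;
   since the AND_S are linearly independent, two rows agree iff the coefficient
   vectors (f~(S) AND_S(x))_S agree, i.e. iff x and x' have the same pattern. *)

Lemma card_imset_le_factor (T rT rT' : finType) (g : T -> rT) (h : T -> rT') :
  (forall x x', g x = g x' -> h x = h x') ->
  (#|[set h x | x : T]| <= #|[set g x | x : T]|)%N.
Proof.
move=> gh; pose k p := omap h [pick x | g x == p].
rewrite -(card_imset _ (@Some_inj _)) -imset_comp.
apply: leq_trans (leq_imset_card k _); apply/subset_leq_card/subsetP.
move=> _ /imsetP[x _ ->]; apply/imsetP; exists (g x); first exact: imset_f.
by rewrite /k; case: pickP => [x' /eqP /gh /= -> | /(_ x)]; rewrite ?eqxx.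
Qed.

Lemma card_imset_eq (T rT rT' : finType) (g : T -> rT) (h : T -> rT') :
  (forall x x', g x = g x' <-> h x = h x') ->
  #|[set g x | x : T]| = #|[set h x | x : T]|.
Proof.
by move=> gh; apply/eqP; rewrite eqn_leq !card_imset_le_factor // => x x' /gh.
Qed.

Lemma sum_signr_interval (R : comPzRingType) (T : finType) (A B : {set T}) :
  A \subset B ->
  \sum_(S : {set T} | (A \subset S) && (S \subset B)) (-1) ^+ #|S| =
  (if A == B then (-1) ^+ #|A| else 0) :> R.
Proof.
move=> AB.
(* Expand prod_i (F i + G i) over the choices of summand: the choice set S
   contributes (-1)^|S| when A <= S <= B and 0 otherwise. *)
pose F i : R := if i \in B then -1 else 0.
pose G i : R := if i \in A then 0 else 1.
have expand_term (S : {set T}) : \prod_i (if i \in S then F i else G i) =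
    if (A \subset S) && (S \subset B) then (-1) ^+ #|S| else 0.
  case: ifP => [/andP[AS SB] | /negbT].
    rewrite -[_ ^+ #|S|](prodr_const [in S]) [RHS]big_mkcond.
    apply: eq_bigr => i _; rewrite /F /G.
    case: (boolP (i \in S)) => iS; first by rewrite (subsetP SB).
    by rewrite (negbTE (contra (subsetP AS _) iS)).
  rewrite negb_and => /orP[/subsetPn[i iA niS] | /subsetPn[i iS niB]].
    by rewrite (bigD1 i) //= (negbTE niS) /G iA mul0r.
  by rewrite (bigD1 i) //= iS /F (negbTE niB) mul0r.
transitivity (\prod_i (F i + G i)).
  by rewrite bigA_distr big_mkcond; apply: eq_bigr => S _; rewrite -expand_term.
case: eqP => [eqAB | /eqP neAB].
  rewrite -[_ ^+ #|A|](prodr_const [in A]) [RHS]big_mkcond.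
  by apply: eq_bigr => i _; rewrite /F /G -eqAB; case: (i \in A); rewrite ?addr0 ?add0r.
have /subsetPn[i iB niA] : ~~ (B \subset A) by rewrite eqEsubset AB in neAB.
by rewrite (bigD1 i) //= /F /G iB (negbTE niA) addNr mul0r.
Qed.

Section OneWayProtocol.

Variables (n : nat) (F : n.-tuple bool -> n.-tuple bool -> bool).

Definition row_of x : {ffun n.-tuple bool -> bool} := [ffun y => F x y].

Definition row_set := [set row_of x | x : n.-tuple bool].

Lemma oneway_protocol_card_row_set c :
  oneway_protocol F c -> (#|row_set| <= 2 ^ c)%N.
Proof.
case/existsP => A /existsP[B /forallP correct].
have rowA x x' : A x = A x' -> row_of x = row_of x'.
  move=> eqA; apply/ffunP => y; rewrite !ffunE.
  by rewrite -(eqP (forallP (correct x) y)) -(eqP (forallP (correct x') y)) eqA.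
apply: leq_trans (card_imset_le_factor rowA) _.
by rewrite (leq_trans (subset_leq_card (subsetT _))) // cardsT card_tuple card_bool.
Qed.

Lemma card_row_set_oneway_protocol c :
  (#|row_set| <= 2 ^ c)%N -> oneway_protocol F c.
Proof.
move=> le_rows.
(* Alice sends the binary code of the position of her row in enum row_set. *)
pose msgs := enum [set: c.-tuple bool].
pose code x := nth [tuple false | _ < c] msgs (index (row_of x) (enum row_set)).
have row_in x : row_of x \in enum row_set by rewrite mem_enum imset_f.
have index_lt x : (index (row_of x) (enum row_set) < size msgs)%N.
  rewrite -cardE cardsT card_tuple card_bool (leq_trans _ le_rows) //.
  by rewrite cardE index_mem.
have code_row x x' : code x = code x' -> row_of x = row_of x'.
  move/eqP; rewrite nth_uniq ?enum_uniq // => /eqP.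
  by move=> eq_idx; apply: (index_inj (row_of x) (row_in x) (row_in x')).
apply/existsP; exists [ffun x => code x]; apply/existsP.
exists [ffun my => [exists x, (code x == my.1) && F x my.2]].
apply/forallP => x; apply/forallP => y; rewrite !ffunE /=.
apply/eqP; apply/existsP/idP => [[x' /andP[/eqP /code_row /ffunP/(_ y)] ] | Fxy].
  by rewrite !ffunE => ->.
by exists x; rewrite eqxx.
Qed.

Lemma Dcc_oneway_row_set : Dcc_oneway F = up_log 2 #|row_set|.
Proof.
rewrite /Dcc_oneway; case: ex_minnP => c Fc c_min.
apply/eqP; rewrite eqn_leq c_min ?card_row_set_oneway_protocol ?up_logP //.
by rewrite up_log_min // oneway_protocol_card_row_set.
Qed.

End OneWayProtocol.

Section MobiusExpansion.

Variable n : nat.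
Implicit Types (S T : {set 'I_n}) (x y z : n.-tuple bool).

Definition ones z : {set 'I_n} := [set i | tnth z i].

Definition andt x y : n.-tuple bool := [tuple tnth x i && tnth y i | i < n].

Lemma ANDS_ones S z : ANDS S z = (S \subset ones z).
Proof. by apply/forall_inP/subsetP => H i /H; rewrite inE. Qed.

Lemma indic_ones z : indic (ones z) = z.
Proof. by apply: eq_from_tnth => i; rewrite tnth_mktuple inE. Qed.

Lemma ANDS_indic S T : ANDS S (indic T) = (S \subset T).
Proof. by apply/forall_inP/subsetP => H i /H; rewrite tnth_mktuple. Qed.

Lemma ANDS_andt S x y : ANDS S (andt x y) = ANDS S x && ANDS S y.
Proof.
suff eq_ones : ones (andt x y) = ones x :&: ones y by rewrite !ANDS_ones eq_ones subsetI.
by apply/setP => i; rewrite !inE tnth_mktuple.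
Qed.

Lemma mobius_expansion (f : n.-tuple bool -> bool) z :
  (f z)%:R = \sum_S mobius f S * (ANDS S z)%:R.
Proof.
set Z := ones z.
transitivity (\sum_(S : {set 'I_n} | S \subset Z) mobius f S); last first.
  rewrite big_mkcond; apply: eq_bigr => S _; rewrite ANDS_ones.
  by case: ifP; rewrite ?mulr1 ?mulr0.
rewrite /mobius.
under eq_bigr => S SZ do under eq_bigr => T TS do
  rewrite exprB ?subset_leq_card ?unitrN1 // invr_sign -mulrA.
rewrite (exchange_big_dep (fun T => T \subset Z)) /=; last first.
  by move=> S T SZ /subset_trans; apply.
under eq_bigr => T TZ do
  rewrite -big_distrl /= (eq_bigl _ _ (fun S => andbC _ _)) sum_signr_interval //.
rewrite (bigD1 Z) //= eqxx big1 ?addr0; last first.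
  by move=> T /andP[_ /negbTE ->]; rewrite mul0r.
by rewrite mulrA -expr2 sqrr_sign mul1r indic_ones.
Qed.

Lemma ANDS_expansion_inj (R : pzRingType) (d d' : {set 'I_n} -> R) :
  (forall y, \sum_S d S * (ANDS S y)%:R = \sum_S d' S * (ANDS S y)%:R) ->
  d =1 d'.
Proof.
move=> eq_d S; have [m] := ubnP #|S|; elim: m S => // m IH S ltSm.
have := eq_d (indic S).
rewrite (bigD1 S) // [X in _ = X](bigD1 S) //= ANDS_indic subxx !mulr1.
rewrite (eq_bigr (fun U => d' U * (ANDS U (indic S))%:R)) => [/addIr // | U neUS].
rewrite ANDS_indic; case US: (U \subset S); last by rewrite !mulr0.
rewrite IH // -ltnS (leq_trans _ ltSm) // ltnS proper_card //.
by rewrite properEneq neUS.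
Qed.

Variable f : n.-tuple bool -> bool.

Lemma compAND_expansion x y :
  (compAND f x y)%:R = \sum_S (mobius f S * (ANDS S x)%:R) * (ANDS S y)%:R.
Proof.
rewrite /compAND -/(andt x y) mobius_expansion; apply: eq_bigr => S _.
by rewrite ANDS_andt -mulnb natrM mulrA.
Qed.

Lemma pattern_eqP x x' :
  pattern f x = pattern f x' <->
  forall S, mobius f S * (ANDS S x)%:R = mobius f S * (ANDS S x')%:R.
Proof.
split=> [/ffunP eq_pat S | eq_coef].
  have := eq_pat S; rewrite !ffunE.
  by case: eqP => [-> | _ /= ->]; rewrite ?mul0r.
apply/ffunP => S; rewrite !ffunE; have := eq_coef S.
case: eqP => //= /eqP nz_S /(mulfI nz_S).
by case: (ANDS S x); case: (ANDS S x').
Qed.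

Lemma row_of_compAND_eqP x x' :
  row_of (compAND f) x = row_of (compAND f) x' <-> pattern f x = pattern f x'.
Proof.
split=> [/ffunP eq_row | /pattern_eqP eq_coef].
  apply/pattern_eqP/ANDS_expansion_inj => y; rewrite -!compAND_expansion.
  by have := eq_row y; rewrite !ffunE => ->.
apply/ffunP => y; rewrite !ffunE.
have : (compAND f x y)%:R = (compAND f x' y)%:R :> int.
  by rewrite !compAND_expansion; apply: eq_bigr => S _; rewrite eq_coef.
by case: (compAND f x y); case: (compAND f x' y).
Qed.

End MobiusExpansion.

Theorem claim4p1 (n : nat) (f : n.-tuple bool -> bool) :
  Dcc_oneway (compAND f) = ceil_log2 (PatM f).
Proof.
rewrite Dcc_oneway_row_set /ceil_log2 /PatM; congr up_log.
by apply: card_imset_eq => x x'; apply: row_of_compAND_eqP.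
Qed.
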